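(* If $Y^*\in\mathcal L^1(\mathcal Q)$, then $$\sup_{\tau\in\mathcal T}\inf_{\mathrm Q\in\overline{\mathcal Q}}\mathbb E_{\mathrm Q}[Y_\tau]=\sup_{\tau\in\mathcal T}\inf_{\mathrm Q\in\mathcal Q}\mathbb E_{\mathrm Q}[Y_\tau]=\sup_{\tau\in\mathcal T}\inf_{\mathrm Q\in co(\mathcal Q)}\mathbb E_{\mathrm Q}[Y_\tau].$$
   Context: Let $(\Omega,\mathcal F,(\mathcal F_t)_{0\le t\le T},\mathrm P)$ be a filtered probability space ($0<T<\infty$) with right-continuous filtration, $\mathcal F=\mathcal F_T$, $\mathcal F_0$ trivial and containing all $\mathrm P$-null sets. $\mathcal T$ is the set of stopping times $\tau\le T$. $\mathcal Q$ is a nonempty set of probability measures on $\mathcal F$, each absolutely continuous w.r.t. $\mathrm P$, $co(\mathcal Q)$ its convex hull. $\mathcal L^1(\mathcal Q)$ is the set of random variables $X$ with $\sup_{\mathrm Q\in\mathcal Q}\mathbb E_{\mathrm Q}[|X|]<\infty$. $Y=(Y_t)_{0\le t\le T}$ is a right-continuous adapted process with bounded paths, quasi left-uppersemicontinuous w.r.t. $\mathrm P$, and $Y^*:=\sup_{t\in[0,T]}|Y_t|$. $\mathcal X$ is the set of random variables $X$ with $|X|\le C(Y^*+1)$ $\mathrm P$-a.s. for some $C>0$; $\rho_{\mathcal Q}(X)=\sup_{\mathrm Q\in\mathcal Q}\mathbb E_{\mathrm Q}[X]$ for $X\in\mathcal X$. $\overline{\mathcal Q}$ is the set of probability measures $\mathrm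 Q$ on $\mathcal F$ such that every $X\in\mathcal X$ is $\mathrm Q$-integrable and $\mathbb E_{\mathrm Q}[X]\le\rho_{\mathcal Q}(X)$ for all $X\in\mathcal X$. *)

From HB Require Import structures.
From mathcomp Require Import all_boot all_order all_algebra.
From mathcomp Require Import all_classical all_reals all_analysis.
From mathcomp Require Import measurable_realfun.
Set Implicit Arguments. Unset Strict Implicit. Unset Printing Implicit Defensive.
Import Order.TTheory GRing.Theory Num.Theory.
Import numFieldNormedType.Exports.
Local Open Scope classical_set_scope.
Local Open Scope ring_scope.
Local Open Scope ereal_scope.

Section Defs.
Context (d : measure_display) (Om : measurableType d) (R : realType).

Definition usual_filtration (P : probability Om R) (Tend : R)
    (F : R -> set (set Om)) : Prop :=
  [/\ (forall t, (0 <= t <= Tend)%R -> sigma_algebra setT (F t)),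
      (forall s t, (0 <= s)%R -> (s <= t)%R -> (t <= Tend)%R -> F s `<=` F t),
      (forall A, F Tend A <-> measurable A) &
   [/\
      (forall t, (0 <= t)%R -> (t < Tend)%R ->
         forall A, F t A <-> (forall s, (t < s)%R -> (s <= Tend)%R -> F s A)),
      (forall A, P.-negligible A -> F 0%R A) &
      (forall A, F 0%R A -> P A = 0 \/ P A = 1)]].

Definition stopping_time (Tend : R) (F : R -> set (set Om)) (tau : Om -> R) :=
  (forall x, (0 <= tau x <= Tend)%R) /\
  (forall t, (0 <= t <= Tend)%R -> F t [set x | (tau x <= t)%R]).

Definition stopped (Y : R -> Om -> R) (tau : Om -> R) : Om -> R :=
  fun x => Y (tau x) x.

Definition adapted (Tend : R) (F : R -> set (set Om)) (Y : R -> Om -> R) :=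
  forall t, (0 <= t <= Tend)%R -> forall B : set R, measurable B ->
    F t (Y t @^-1` B).

Definition right_continuous_paths (Tend : R) (Y : R -> Om -> R) :=
  forall x t, (0 <= t)%R -> (t < Tend)%R -> Y^~ x @ t^'+ --> Y t x.

Definition bounded_paths (Tend : R) (Y : R -> Om -> R) :=
  forall x, exists M : R, forall t, (0 <= t <= Tend)%R -> (`|Y t x| <= M)%R.

Definition quasi_left_usc (P : probability Om R) (Tend : R)
    (F : R -> set (set Om)) (Y : R -> Om -> R) :=
  forall (taus : nat -> Om -> R) (tau : Om -> R),
    (forall n, stopping_time Tend F (taus n)) -> stopping_time Tend F tau ->
    (forall x, {homo (fun n => taus n x) : m n / (m <= n)%N >-> (m <= n)%R}) ->
    (forall x, (fun n => taus n x) @ \oo --> tau x) ->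
    {ae P, forall x, limn_esup (fun n => (stopped Y (taus n) x)%:E)
                      <= (stopped Y tau x)%:E}.

Definition Ystar (Tend : R) (Y : R -> Om -> R) : Om -> \bar R :=
  fun x => ereal_sup [set (`|Y t x|)%:E | t in `[0%R, Tend]].

Definition expect (Q : probability Om R) (X : Om -> R) : \bar R :=
  \int[Q]_x (X x)%:E.

Definition in_L1 (Qs : set (probability Om R)) (X : Om -> \bar R) :=
  measurable_fun setT X /\
  ereal_sup [set \int[Q]_x `|X x| | Q in Qs] < +oo.

Definition conv_hull (Qs : set (probability Om R)) : set (probability Om R) :=
  [set Q : probability Om R | exists (n : nat) (w : 'I_n -> R) (Qi : 'I_n -> probability Om R),
     [/\ (forall i, 0 <= w i)%R, (\sum_(i < n) w i)%R = 1%R,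
         (forall i, Qs (Qi i)) &
         forall A, measurable A -> Q A = \sum_(i < n) (w i)%:E * Qi i A]].

Definition Xspace (P : probability Om R) (Tend : R) (Y : R -> Om -> R) :
    set (Om -> R) :=
  [set X : Om -> R | measurable_fun setT X /\
     exists C : R, (0 < C)%R /\
       {ae P, forall x, (`|X x|)%:E <= C%:E * (Ystar Tend Y x + 1)}].

Definition rho (Qs : set (probability Om R)) (X : Om -> R) : \bar R :=
  ereal_sup [set expect Q X | Q in Qs].

Definition Qbar (P : probability Om R) (Tend : R) (Y : R -> Om -> R)
    (Qs : set (probability Om R)) : set (probability Om R) :=
  [set Q : probability Om R | forall X, Xspace P Tend Y X ->
     Q.-integrable setT (EFin \o X) /\ expect Q X <= rho Qs X].

Definition robust_value (Tend : R) (F : R -> set (set Om)) (Y : R -> Om -> R)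
    (Qs : set (probability Om R)) : \bar R :=
  ereal_sup [set ereal_inf [set expect Q (stopped Y tau) | Q in Qs]
            | tau in [set tau | stopping_time Tend F tau]].

End Defs.

From HB Require Import structures.
From mathcomp Require Import all_boot all_order all_algebra.
From mathcomp Require Import all_classical all_reals all_analysis.
From mathcomp Require Import measurable_realfun.
Set Implicit Arguments. Unset Strict Implicit. Unset Printing Implicit Defensive.
Import Order.TTheory GRing.Theory Num.Theory.
Import numFieldNormedType.Exports.
Local Open Scope classical_set_scope.
Local Open Scope ring_scope.

(* For each fixed stopping time tau the three infima over Qbar, Qs and
   co(Qs) already agree.  Approximating tau from above by grid-valued
   stopping times and using right-continuity of the paths shows that Y_tau is
   measurable; it is dominated by Y^*, hence lies in the space X.  Since Y^* is
   Qs-integrable and Qs << P, every Q in Qs is in Qbar; conversely, for Q in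
   Qbar the defining inequality applied to -Y_tau gives
   E_Q[Y_tau] >= inf_{Qs} E[Y_tau].  Expectations are affine along convex
   combinations, so co(Qs) does not lower the infimum either. *)

Section stopping_time.
Context d (Om : measurableType d) (R : realType).
Variables (P : probability Om R) (Tend : R) (F : R -> set (set Om)).
Hypothesis HF : usual_filtration P Tend F.

Lemma filtration_measurable t A : 0 <= t <= Tend -> F t A -> measurable A.
Proof.
case: HF => _ F_mono F_Tend _ /andP[t0 tT] FtA.
by apply/F_Tend; exact: F_mono FtA.
Qed.

Lemma adapted_measurable Y t : adapted Tend F Y -> 0 <= t <= Tend ->
  measurable_fun setT (Y t).
Proof.
move=> Yad t0T _ B mB; rewrite setTI.
exact: filtration_measurable t0T (Yad t t0T B mB).
Qed.

Variable tau : Om -> R.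
Hypothesis tau_stop : stopping_time Tend F tau.

Lemma stopping_time_le_measurable s : measurable [set x | tau x <= s].
Proof.
case: tau_stop => tau_itv tau_le.
have [s0|s0] := ltP s 0.
  rewrite (_ : [set x | _] = set0) //; apply/seteqP; split=> x //=.
  by case/andP: (tau_itv x) => tau0 _ /(le_trans tau0); rewrite leNgt s0.
have [Ts|sT] := ltP Tend s.
  rewrite (_ : [set x | _] = setT) //; apply/seteqP; split=> x //= _.
  by case/andP: (tau_itv x) => _ /le_trans; apply; exact: ltW.
by apply: (@filtration_measurable s); [|apply: tau_le]; rewrite s0 sT.
Qed.

Lemma stopping_time_measurable : measurable_fun setT tau.
Proof.
apply: (measurability _ (RGenOInfty.measurableE R)) => _ [_ [s ->] <-].
rewrite setTI (_ : _ @^-1` _ = ~` [set x | tau x <= s]).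
  exact/measurableC/stopping_time_le_measurable.
by apply/seteqP; split=> x /=; rewrite in_itv /= andbT ltNge => /negP.
Qed.

End stopping_time.

Lemma measurable_fun_indexed d (Om : measurableType d)
    d' (U : measurableType d')
    (Z : nat -> Om -> U) (c : Om -> nat) :
  (forall k, measurable [set x | c x = k]) ->
  (forall k, measurable_fun setT (Z k)) ->
  measurable_fun setT (fun x => Z (c x) x).
Proof.
move=> mc mZ _ B mB; rewrite setTI.
rewrite (_ : _ @^-1` B = \bigcup_k ([set x | c x = k] `&` Z k @^-1` B)).
  apply: bigcupT_measurable => k; apply: measurableI => //.
  by rewrite -[_ @^-1` _]setTI; exact: mZ.
by apply/seteqP; split=> [x Bx|x [k _ [/= <-]]] //; exists (c x).
Qed.

Section grid_approx.
Context {R : realType}.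
Implicit Types (Tend t : R) (m : nat).

(* Strictly above [t], so that right-continuity of the paths applies. *)
Definition grid_above m t : R := (Num.truncn (t * m.+1%:R)).+1%:R / m.+1%:R.

Lemma grid_above_gt m t : 0 <= t -> t < grid_above m t.
Proof.
move=> t0; rewrite ltr_pdivlMr //.
by case/andP: (truncn_itv (mulr_ge0 t0 (ler0n _ m.+1))).
Qed.

Lemma grid_above_le m t : 0 <= t -> grid_above m t <= t + m.+1%:R^-1.
Proof.
move=> t0; rewrite ler_pdivrMr // mulrDl mulVf // -natr1 lerD2r.
by case/andP: (truncn_itv (mulr_ge0 t0 (ler0n _ m.+1))).
Qed.

Definition grid_approx Tend m t : R := Num.min (grid_above m t) Tend.

Lemma grid_approx_Tend Tend m : 0 <= Tend -> grid_approx Tend m Tend = Tend.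
Proof. by move=> T0; apply/min_idPr/ltW/grid_above_gt. Qed.

Lemma grid_approx_gt Tend m t : 0 <= t < Tend -> t < grid_approx Tend m t.
Proof. by case/andP=> t0 tT; rewrite lt_min tT grid_above_gt. Qed.

Lemma grid_approx_itv Tend m t : 0 <= t <= Tend ->
  t <= grid_approx Tend m t <= t + m.+1%:R^-1.
Proof.
case/andP=> t0 tT; rewrite ge_min grid_above_le // orTb andbT.
by rewrite le_min tT andbT ltW // grid_above_gt.
Qed.

Lemma grid_approx_cvg Tend t : 0 <= t <= Tend ->
  grid_approx Tend m t @[m --> \oo] --> t.
Proof.
move=> t0T; apply: (@squeeze_cvgr _ _ _ _ (cst t) (fun m => t + m.+1%:R^-1)).
- by near=> m; exact: grid_approx_itv.
- exact: cvg_cst.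
- rewrite -[X in _ --> X]addr0.
  by apply: cvgD; [exact: cvg_cst|exact: cvg_harmonic].
Unshelve. all: by end_near. Qed.

Lemma grid_approx_right_cvg (f : R -> R) Tend t : 0 <= t <= Tend ->
  (t < Tend -> f x @[x --> t^'+] --> f t) ->
  f (grid_approx Tend m t) @[m --> \oo] --> f t.
Proof.
move=> t0T f_rc; have [t0 tT] := andP t0T; have [tT'|tT'] := ltP t Tend.
  move/cvg_at_rightP: (f_rc tT'); apply; split; last exact: grid_approx_cvg.
  by move=> m; rewrite grid_approx_gt // t0.
have -> : t = Tend by apply/eqP; rewrite eq_le tT.
under eq_fun do rewrite grid_approx_Tend ?(le_trans t0 tT) //.
exact: cvg_cst.
Qed.

End grid_approx.

Lemma Xspace_le_Ystar d (Om : measurableType d) (R : realType)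
    (P : probability Om R) (Tend : R) (Y : R -> Om -> R) (X : Om -> R) :
  measurable_fun setT X ->
  (forall x, (`|X x|%:E <= Ystar Tend Y x)%E) -> Xspace P Tend Y X.
Proof.
move=> mX XY; split => //; exists 1%R; split => //; apply: aeW => x.
by rewrite mul1e (le_trans (XY x)) // leeDl.
Qed.

Section stopped_process.
Context d (Om : measurableType d) (R : realType).
Variables (P : probability Om R) (Tend : R) (F : R -> set (set Om)).
Variable Y : R -> Om -> R.
Hypothesis Tend_ge0 : 0 <= Tend.
Hypothesis HF : usual_filtration P Tend F.
Hypothesis Yad : adapted Tend F Y.
Hypothesis Yrc : right_continuous_paths Tend Y.
Variable tau : Om -> R.
Hypothesis tau_stop : stopping_time Tend F tau.

Let tau_itv x : 0 <= tau x <= Tend. Proof. by case: tau_stop. Qed.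

Lemma stopped_grid_approx_measurable m :
  measurable_fun setT (stopped Y (grid_approx Tend m \o tau)).
Proof.
pose c x := Num.truncn (tau x * m.+1%:R).
pose Z k := Y (Num.min (k.+1%:R / m.+1%:R) Tend).
apply: (@measurable_fun_indexed _ _ _ _ Z c) => k.
  rewrite (_ : [set x | c x = k] =
           (fun x => tau x * m.+1%:R) @^-1` `[k%:R, k.+1%:R[).
    have mtau := stopping_time_measurable HF tau_stop.
    rewrite -[_ @^-1` _]setTI.
    exact: (measurable_funM mtau (measurable_cst _)).
  apply/seteqP; split=> x /=; have /andP[tau0 _] := tau_itv x;
    by rewrite in_itv /= -truncn_eq ?mulr_ge0 // => /eqP.
apply: (adapted_measurable HF Yad).
by rewrite le_min Tend_ge0 ge_min lexx orbT !andbT divr_ge0.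
Qed.

Lemma stopped_measurable : measurable_fun setT (stopped Y tau).
Proof.
pose Y_ m := stopped Y (grid_approx Tend m \o tau).
apply: (@measurable_fun_cvg _ _ _ _ Y_) => [|x _].
  exact: stopped_grid_approx_measurable.
apply: (@grid_approx_right_cvg _ (Y^~ x) _ _ (tau_itv x)) => tauT.
by case/andP: (tau_itv x) => tau0 _; exact: Yrc.
Qed.

Lemma stopped_le_Ystar x : (`|stopped Y tau x|%:E <= Ystar Tend Y x)%E.
Proof.
by apply: ereal_sup_ubound; exists (tau x) => //=; rewrite in_itv /= tau_itv.
Qed.

Lemma stopped_Xspace : Xspace P Tend Y (stopped Y tau).
Proof.
by apply: Xspace_le_Ystar; [exact: stopped_measurable|exact: stopped_le_Ystar].
Qed.

End stopped_process.

Local Open Scope ereal_scope.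

Lemma null_dominates_ae d (T : measurableType d) (R : realType)
    (mu nu : {measure set T -> \bar R}) (p : T -> Prop) :
  nu `<< mu -> {ae mu, forall x, p x} -> {ae nu, forall x, p x}.
Proof.
move=> /null_content_dominatesP nu_mu [N [mN muN pN]].
by exists N; split => //; exact: nu_mu.
Qed.

Lemma ae_le_integrable d (T : measurableType d) (R : realType)
    (mu : {measure set T -> \bar R}) (f g : T -> \bar R) :
  measurable_fun setT f -> {ae mu, forall x, `|f x| <= g x} ->
  mu.-integrable setT g -> mu.-integrable setT f.
Proof.
move=> mf fg /integrableP[mg g_fin]; apply/integrableP; split => //.
apply: le_lt_trans g_fin; apply: ae_ge0_le_integral => //.
- exact: measurableT_comp.
- exact: measurableT_comp.
- by apply: filterS fg => x fgx _; exact: le_trans fgx (lee_abs _).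
Qed.

Lemma in_L1_integrable d (Om : measurableType d) (R : realType)
    (Qs : set (probability Om R)) (X : Om -> \bar R) Q :
  in_L1 Qs X -> Qs Q -> Q.-integrable setT X.
Proof.
case=> mX X_fin QsQ; apply/integrableP; split => //.
by apply: le_lt_trans X_fin; apply: ereal_sup_ubound; exists Q.
Qed.

Lemma expectN d (Om : measurableType d) (R : realType) (Q : probability Om R)
    (X : Om -> R) :
  Q.-integrable setT (EFin \o X) -> expect Q (fun x => - X x)%R = - expect Q X.
Proof.
move=> intX; rewrite /expect; under eq_integral do rewrite EFinN.
apply: integralN; apply: fin_num_adde_defl.
by rewrite fin_numN; exact: integrable_neg_fin_num intX.
Qed.

Lemma rhoN d (Om : measurableType d) (R : realType)
    (Qs : set (probability Om R)) (X : Om -> R) :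
  (forall Q, Qs Q -> Q.-integrable setT (EFin \o X)) ->
  rho Qs (fun x => - X x)%R = - ereal_inf [set expect Q X | Q in Qs].
Proof.
move=> intX; rewrite /rho -ereal_supN; congr ereal_sup.
apply/seteqP; split=> y.
- by move=> [Q QsQ <-]; exists (expect Q X); [exists Q|rewrite expectN // intX].
- by move=> [z [Q QsQ <-] <-]; exists Q => //; rewrite expectN // intX.
Qed.

Section upper_closure.
Context d (Om : measurableType d) (R : realType).
Variables (P : probability Om R) (Tend : R) (Y : R -> Om -> R).
Variable Qs : set (probability Om R).

Lemma XspaceN (X : Om -> R) :
  Xspace P Tend Y X -> Xspace P Tend Y (fun x => - X x)%R.
Proof.
case=> mX [C [C0 XC]]; split; first exact: measurable_funN.
by exists C; split => //; apply: filterS XC => x; rewrite normrN.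
Qed.

Lemma Xspace_integrable (Q : probability Om R) (X : Om -> R) :
  Q `<< P -> Q.-integrable setT (Ystar Tend Y) ->
  Xspace P Tend Y X -> Q.-integrable setT (EFin \o X).
Proof.
move=> QP intY [mX [C [C0 XC]]].
apply: (@ae_le_integrable _ _ _ _ _ (fun x => C%:E * (Ystar Tend Y x + 1))).
- exact/measurable_EFinP.
- exact: null_dominates_ae XC.
- apply: integrableZl => //; apply: integrableD => //.
  exact: finite_measure_integrable_cst.
Qed.

Lemma Qs_sub_Qbar : (forall Q, Qs Q -> Q `<< P) -> in_L1 Qs (Ystar Tend Y) ->
  Qs `<=` Qbar P Tend Y Qs.
Proof.
move=> QsP YL1 Q QsQ X HX; split.
  exact: Xspace_integrable (QsP _ QsQ) (in_L1_integrable YL1 QsQ) HX.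
by apply: ereal_sup_ubound; exists Q.
Qed.

Lemma ereal_inf_Qbar (X : Om -> R) :
  Qs `<=` Qbar P Tend Y Qs -> Xspace P Tend Y X ->
  ereal_inf [set expect Q X | Q in Qbar P Tend Y Qs] =
  ereal_inf [set expect Q X | Q in Qs].
Proof.
move=> QsQbar HX; apply/eqP; rewrite eq_le; apply/andP; split.
  by apply: ereal_inf_le_tmp; apply: image_subset.
apply: le_ereal_inf_tmp => _ [Q QbarQ <-].
have [_] := QbarQ _ (XspaceN HX).
rewrite expectN; last exact: (QbarQ _ HX).1.
by rewrite rhoN ?leeN2// => Q' /QsQbar/(_ _ HX) [].
Qed.

End upper_closure.

Section mixture.
Context d (Om : measurableType d) (R : realType).
Variables (n : nat) (w : 'I_n -> R) (Qi : 'I_n -> probability Om R).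
Variable Q : probability Om R.
Hypothesis w_ge0 : forall i, (0 <= w i)%R.
Hypothesis QE : forall A, measurable A -> Q A = \sum_(i < n) (w i)%:E * Qi i A.

Lemma ge0_integral_mixture (g : Om -> \bar R) :
  measurable_fun setT g -> (forall x, 0 <= g x) ->
  \int[Q]_x g x = \sum_(i < n) (w i)%:E * \int[Qi i]_x g x.
Proof.
move=> mg g0.
pose m_ k : measure Om R := if insub k is Some i
  then mscale (NngNum (w_ge0 i)) (Qi i) else mzero.
rewrite (@eq_measure_integral _ _ _ setT (msum m_ n)); last first.
  move=> A mA _; apply: eq_trans (QE mA) _; apply: eq_bigr => i _.
  by rewrite /m_ valK.
rewrite ge0_integral_measure_sum //; apply: eq_bigr => i _.
by rewrite /m_ valK ge0_integral_mscale.
Qed.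

Lemma expect_mixture (X : Om -> R) : measurable_fun setT X ->
  (forall i, (Qi i).-integrable setT (EFin \o X)) ->
  expect Q X = \sum_(i < n) (w i)%:E * expect (Qi i) X.
Proof.
move=> mX intX.
have mX' : measurable_fun setT (EFin \o X) by exact/measurable_EFinP.
have neg_fin i : \int[Qi i]_x (EFin \o X)^\- x \is a fin_num.
  exact: integrable_neg_fin_num (intX i).
rewrite /expect integralE.
rewrite !ge0_integral_mixture //; last 2 first.
- exact: measurable_funeneg.
- exact: measurable_funepos.
rewrite -fin_num_sumeN; last by move=> i _; rewrite fin_numM.
rewrite -big_split /=; apply: eq_bigr => i _.
by rewrite -muleBr ?fin_num_adde_defl ?fin_numN // -integralE.
Qed.

End mixture.

Lemma convex_sum_ge (R : realType) n (w : 'I_n -> R) (a : \bar R)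
    (x : 'I_n -> \bar R) :
  (forall i, 0 <= w i)%R -> (\sum_(i < n) w i = 1)%R ->
  (forall i, x i \is a fin_num) -> (forall i, a <= x i) ->
  a <= \sum_(i < n) (w i)%:E * x i.
Proof.
move=> w_ge0 w1 x_fin ax; case: a ax => [r| |] ax; last exact: leNye.
- rewrite -[r]mul1r -w1 mulr_suml -sumEFin; apply: lee_sum => i _.
  by rewrite EFinM lee_wpmul2l // lee_fin.
- case: n w x w_ge0 w1 x_fin ax => [|n] w x _ w1 x_fin ax.
    by move: w1; rewrite big_ord0 => /eqP; rewrite eq_sym oner_eq0.
  by have := x_fin ord0; move: (ax ord0); rewrite leye_eq => /eqP ->.
Qed.

Lemma ereal_inf_conv_hull d (Om : measurableType d) (R : realType)
    (Qs : set (probability Om R)) (X : Om -> R) :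
  measurable_fun setT X -> (forall Q, Qs Q -> Q.-integrable setT (EFin \o X)) ->
  ereal_inf [set expect Q X | Q in conv_hull Qs] =
  ereal_inf [set expect Q X | Q in Qs].
Proof.
move=> mX intX; apply/eqP; rewrite eq_le; apply/andP; split.
  apply: ereal_inf_le_tmp; apply: image_subset => Q QsQ.
  exists 1%N, (fun _ => 1%R), (fun _ => Q).
  split => //; first by rewrite big_ord1.
  by move=> A mA; rewrite big_ord1 mul1e.
apply: le_ereal_inf_tmp => _ [Q [n [w [Qi [w_ge0 w1 QsQi QE]]]] <-].
rewrite (expect_mixture w_ge0 QE mX (fun i => intX _ (QsQi i))).
apply: convex_sum_ge => // i.
  exact: integrable_fin_num (intX _ (QsQi i)).
by apply: ereal_inf_lbound; exists (Qi i).
Qed.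

Lemma robust_value_eq d (Om : measurableType d) (R : realType) (Tend : R)
    (F : R -> set (set Om)) (Y : R -> Om -> R)
    (Qs1 Qs2 : set (probability Om R)) :
  (forall tau, stopping_time Tend F tau ->
     ereal_inf [set expect Q (stopped Y tau) | Q in Qs1] =
     ereal_inf [set expect Q (stopped Y tau) | Q in Qs2]) ->
  robust_value Tend F Y Qs1 = robust_value Tend F Y Qs2.
Proof. by move=> eq_inf; congr ereal_sup; apply: eq_imagel. Qed.

Theorem proposition6p2 (d : measure_display) (Om : measurableType d)
  (R : realType) (P : probability Om R) (Tend : R) (F : R -> set (set Om))
  (Qs : set (probability Om R)) (Y : R -> Om -> R) :
  (0 < Tend)%R ->
  usual_filtration P Tend F ->
  Qs !=set0 ->
  (forall Q, Qs Q -> Q `<< P) ->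
  right_continuous_paths Tend Y ->
  adapted Tend F Y ->
  bounded_paths Tend Y ->
  quasi_left_usc P Tend F Y ->
  in_L1 Qs (Ystar Tend Y) ->
  robust_value Tend F Y (Qbar P Tend Y Qs) = robust_value Tend F Y Qs /\
  robust_value Tend F Y Qs = robust_value Tend F Y (conv_hull Qs).
Proof.
move=> T0 HF _ QsP Yrc Yad _ _ YL1.
have QsQbar := Qs_sub_Qbar QsP YL1.
split; apply: robust_value_eq => tau tau_stop;
  have XY := stopped_Xspace (ltW T0) HF Yad Yrc tau_stop.
  exact: ereal_inf_Qbar QsQbar XY.
by symmetry; apply: ereal_inf_conv_hull XY.1 _ => Q /QsQbar/(_ _ XY) [].
Qed.
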